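(* Let $q_1,q_2$ be positive probability densities on $\mathbb{R}^d$ with unnormalized versions $\tilde q_i=Z_iq_i$ and $r=Z_1/Z_2$. Let $\{T_\phi:\phi\in\mathbb{R}^l\}$ be a family of smooth invertible maps $\mathbb{R}^d\to\mathbb{R}^d$ with smooth inverses, and for each $\phi$ let $q_1^{(\phi)}$ be the density of $T_\phi(\omega)$ for $\omega\sim q_1$, with unnormalized version $\tilde q_1^{(\phi)}(x)=\tilde q_1(T_\phi^{-1}(x))\,|\det J_{T_\phi^{-1}}(x)|$ (so $\tilde q_1^{(\phi)}=Z_1q_1^{(\phi)}$). Fix $n_1,n_2\ge1$, $n=n_1+n_2$, $s_i=n_i/n$. For $\tilde r>0$, $\phi\in\mathbb{R}^l$, define $$G_{s_2}(\tilde r,\phi)=1-\frac{1}{s_2}E_{q_1^{(\phi)}}\!\left[\left(\frac{s_2\tilde q_2(\omega)\tilde r}{s_1\tilde q_1^{(\phi)}(\omega)+s_2\tilde q_2(\omega)\tilde r}\right)^{2}\right]-\frac{1}{s_1}E_{q_2}\!\left[\left(\frac{s_1\tilde q_1^{(\phi)}(\omega)}{s_1\tilde q_1^{(\phi)}(\omega)+s_2\tilde q_2(\omega)\tilde r}\right)^{2}\right].$$ Suppose $(\tilde r^*,\phi^* )$ solves $\min_{\phi\in\mathbb{R}^l}\max_{\tilde r>0}G_{s_2}(\tilde r,\phi)$, i.e. $\phi^*$ minimizes $\phi\mapsto\sup_{\tilde r>0}G_{s_2}(\tilde r,\phi)$ and $\tilde r^*$ attains $\sup_{\tilde r>0}G_{s_2}(\tilde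 r,\phi^* )$. Then $\tilde r^*=r$, $G_{s_2}(\tilde r^*,\phi)=H_{s_2}(q_1^{(\phi)},q_2)$ for every $\phi\in\mathbb{R}^l$, and $\phi^*$ minimizes $\phi\mapsto H_{s_2}(q_1^{(\phi)},q_2)$ over $\mathbb{R}^l$. Consequently $\phi^*$ also minimizes over $\mathbb{R}^l$ the quantity $\frac{1}{ns_1s_2}\left[\left(1-H_{s_2}(q_1^{(\phi)},q_2)\right)^{-1}-1\right]$.
   Context: $H_\pi(p_1,p_2)=1-\int\left(\pi p_1^{-1}+(1-\pi)p_2^{-1}\right)^{-1}d\mu$ is the weighted harmonic divergence. For i.i.d. samples of sizes $n_1,n_2$ from $q_1^{(\phi)}$ and $q_2$, the quantity $\frac{1}{ns_1s_2}[(1-H_{s_2}(q_1^{(\phi)},q_2))^{-1}-1]$ is the first-order term of the asymptotic relative mean square error of the asymptotically optimal Bridge estimator of $r$ based on $\tilde q_1^{(\phi)},\tilde q_2$. *)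

From HB Require Import structures.
From mathcomp Require Import all_boot all_order all_algebra.
From mathcomp Require Import all_classical all_reals all_analysis.
Set Implicit Arguments. Unset Strict Implicit. Unset Printing Implicit Defensive.
Import Order.TTheory GRing.Theory Num.Theory.
Local Open Scope classical_set_scope.
Local Open Scope ring_scope.

(* Base measure space (T, mu); in the paper T = R^d and mu = Lebesgue measure. *)

Definition pos_density {dT : measure_display} {R : realType}
  {T : measurableType dT} (mu : {measure set T -> \bar R}) (q : T -> R) : Prop :=
  measurable_fun setT q /\ (forall x, 0 < q x) /\
  (\int[mu]_x (q x)%:E = 1)%E.

Definition expect {dT : measure_display} {R : realType}
  {T : measurableType dT} (mu : {measure set T -> \bar R}) (q f : T -> R) : R :=
  Rintegral mu setT (fun x => q x * f x).

Definition harmonic_div {dT : measure_display} {R : realType}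
  {T : measurableType dT} (mu : {measure set T -> \bar R}) (pi : R) (p1 p2 : T -> R) : R :=
  1 - Rintegral mu setT (fun x => (pi / p1 x + (1 - pi) / p2 x)^-1).

(* G_{s2}(rt) for the pair (qt1, p1) (unnormalized / normalized first density)
   and (qt2, p2); s1 = 1 - s2 passed explicitly. *)
Definition G_obj {dT : measure_display} {R : realType}
  {T : measurableType dT} (mu : {measure set T -> \bar R}) (s1 s2 : R)
  (qt1 p1 qt2 p2 : T -> R) (rt : R) : R :=
  1 - s2^-1 * expect mu p1 (fun x =>
        (s2 * qt2 x * rt / (s1 * qt1 x + s2 * qt2 x * rt)) ^+ 2)
    - s1^-1 * expect mu p2 (fun x =>
        (s1 * qt1 x / (s1 * qt1 x + s2 * qt2 x * rt)) ^+ 2).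

Definition sup_pos {R : realType} (g : R -> R) : R :=
  sup [set g rt | rt in [set rt : R | 0 < rt]].

From HB Require Import structures.
From mathcomp Require Import all_boot all_order all_algebra.
From mathcomp Require Import all_classical all_reals all_analysis.
From mathcomp Require Import ring lra.
Import Order.TTheory GRing.Theory Num.Theory.
Local Open Scope classical_set_scope.
Local Open Scope ring_scope.

(* Write a = p1 x, b = q2 x for the two normalized densities, r = Z1 / Z2 and
   t = rt / r.  A direct computation shows that the integrand of the Bridge
   objective splits pointwise as
       s2^-1 a (s2 b t / (s1 a + s2 b t))^2 + s1^-1 b (s1 a / (s1 a + s2 b t))^2
     = (s2 / a + s1 / b)^-1 + excess s1 s2 t a b,
   where the excess term carries a factor (t - 1)^2 and is otherwise positive.
   Integrating, G(rt) = H - (integral of the excess), so for every pair of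
   densities G(rt) <= H, with equality exactly at rt = r.  Hence
   sup_{rt > 0} G(rt, phi) = H(phi) for every phi, the maximizer rt* must be r,
   minimizing the supremum over phi is minimizing H, and since the asymptotic
   relative MSE (n s1 s2)^-1 ((1 - H)^-1 - 1) is increasing in H < 1, phi* also
   minimizes it.  The argument is carried out for each phi separately and only
   uses that q1^(phi) is a positive density with normalizing constant Z1; the
   transport structure of T_phi plays no further role. *)

Local Notation measurable_EFinP := measurable_realfun.measurable_EFinP.
Local Notation measurable_funD := measurable_realfun.measurable_funD.
Local Notation measurable_funM := measurable_realfun.measurable_funM.
Local Notation measurable_funX := measurable_realfun.measurable_funX.

Ltac measurability := repeat (first [ assumption | exact: measurable_cst
  | apply: measurable_funD | apply: measurable_funX | apply: measurable_funM ]).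

Section real_integration.
Context {dT : measure_display} {R : realType} {T : measurableType dT}
  (mu : {measure set T -> \bar R}).

Lemma measurable_fun_inv_pos (f : T -> R) : measurable_fun setT f ->
  (forall x, 0 < f x) -> measurable_fun setT (fun x => (f x)^-1).
Proof.
move=> mf fpos.
have -> : (fun x => (f x)^-1) = (fun x => powR (f x) (-1)).
  by apply/funext => x; rewrite powR_inv1 // ltW.
exact: measurableT_comp (@measurable_realfun.measurable_powR R (-1)) mf.
Qed.

Lemma integrable_dominated (f g : T -> R) : measurable_fun setT f ->
  mu.-integrable setT (EFin \o g) -> (forall x, `|f x| <= `|g x|) ->
  mu.-integrable setT (EFin \o f).
Proof.
move=> mf ig fg; apply: le_integrable ig => //; first exact/measurable_EFinP.
by move=> x _ /=; rewrite lee_fin.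
Qed.

Lemma integrable_scale (k : R) {f : T -> R} : mu.-integrable setT (EFin \o f) ->
  mu.-integrable setT (EFin \o (fun x => k * f x)).
Proof.
move=> i; exact: eq_integrable (integrableZl measurableT k i).
Qed.

Lemma integrable_add {f g : T -> R} : mu.-integrable setT (EFin \o f) ->
  mu.-integrable setT (EFin \o g) ->
  mu.-integrable setT (EFin \o (fun x => f x + g x)).
Proof.
move=> i j; exact: eq_integrable (integrableD measurableT i j).
Qed.

Lemma integrable_sub {f g : T -> R} : mu.-integrable setT (EFin \o f) ->
  mu.-integrable setT (EFin \o g) ->
  mu.-integrable setT (EFin \o (fun x => f x - g x)).
Proof.
move=> i j; exact: eq_integrable (integrableB measurableT i j).
Qed.

Lemma density_integrable {q : T -> R} : pos_density mu q ->
  mu.-integrable setT (EFin \o q).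
Proof.
move=> [mq [qpos q1]]; apply/integrableP; split; first exact/measurable_EFinP.
rewrite (eq_integral (fun x => (q x)%:E)); first by rewrite q1 ltry.
by move=> x _ /=; rewrite gtr0_norm.
Qed.

Lemma density_mass_neq0 {q : T -> R} : pos_density mu q -> mu setT != 0%E.
Proof.
move=> [mq [qpos q1]]; apply/eqP => mu0.
have := @null_set_integral _ _ _ mu setT (EFin \o q) measurableT
  (iffRL (measurable_EFinP _ _) mq) mu0.
by rewrite q1 => /eqP; rewrite eqe oner_eq0.
Qed.

(* On a nonzero measure, an integrable everywhere-positive function has a
   positive integral: a vanishing integral would make it 0 almost everywhere. *)
Lemma Rintegral_gt0 {g : T -> R} : (forall x, 0 < g x) ->
  mu.-integrable setT (EFin \o g) -> mu setT != 0%E ->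
  0 < Rintegral mu setT g.
Proof.
move=> gpos ig muT.
rewrite lt_neqAle Rintegral_ge0 ?andbT; last by move=> x _; exact: ltW.
apply/negP => /eqP g0.
have abs0 : (\int[mu]_x `|(EFin \o g) x| = 0)%E.
  rewrite (eq_integral (fun x => (g x)%:E)); last first.
    by move=> x _ /=; rewrite gtr0_norm.
  by rewrite -(fineK (integrable_fin_num measurableT ig)) -/(Rintegral mu setT g) -g0.
have [N [mN N0 gN]] :=
  (ae_eq_integral_abs mu measurableT (measurable_int mu ig)).1 abs0.
move: muT; rewrite -(@measure_le0 _ _ _ mu) => /negP; apply.
rewrite -N0 le_measure ?inE // => x _; apply: gN => /= /(_ I) /= [] /eqP.
by rewrite gt_eqF.
Qed.

End real_integration.

Lemma sup_pos_attained {R : realType} {g : R -> R} (r : R) : 0 < r ->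
  (forall rt, 0 < rt -> g rt <= g r) -> sup_pos g = g r.
Proof.
move=> r0 gr; apply/le_anti/andP; split.
  apply: ge_sup; first by exists (g r), r.
  by move=> _ [rt rt0 <-]; exact: gr.
apply: ub_le_sup; last by exists r.
by exists (g r) => _ [rt rt0 <-]; exact: gr.
Qed.

(* A positive part of a positive sum is at most the whole; this bounds the
   Bridge integrands by the densities. *)
Lemma part_over_sum_le1 {R : realFieldType} (u v : R) :
  0 < u -> 0 < v -> u / (u + v) <= 1.
Proof. by move=> u0 v0; rewrite ler_pdivrMr ?addr_gt0 // mul1r lerDl ltW. Qed.

(* Pointwise excess of the Bridge integrand over the harmonic-mean integrand,
   at densities a, b and relative ratio t = rt / r. *)
Definition excess {R : realFieldType} (s1 s2 t a b : R) : R :=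
  a * b * ((s1 * a) * (s2 * b) * (t - 1) ^+ 2) /
    ((s1 * a + s2 * b * t) ^+ 2 * (s1 * a + s2 * b)).

Lemma bridge_integrand_split {R : realFieldType} (Z1 Z2 s1 s2 rt a b : R) :
  0 < Z1 -> 0 < Z2 -> 0 < s1 -> 0 < s2 -> s1 + s2 = 1 ->
  0 < rt -> 0 < a -> 0 < b ->
  s2^-1 * (a * (s2 * (Z2 * b) * rt / (s1 * (Z1 * a) + s2 * (Z2 * b) * rt)) ^+ 2)
  + s1^-1 * (b * (s1 * (Z1 * a) / (s1 * (Z1 * a) + s2 * (Z2 * b) * rt)) ^+ 2)
  = (s2 / a + (1 - s2) / b)^-1 + excess s1 s2 (rt * Z2 / Z1) a b.
Proof.
move=> z1 z2 s1p s2p s12 rt0 a0 b0.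
have -> : 1 - s2 = s1 by lra.
have pos_neq0 (x : R) : 0 < x -> (x != 0) = true by move/lt0r_neq0.
rewrite /excess; field.
by rewrite !pos_neq0 // ?addr_gt0 // ?mulr_gt0 // ?divr_gt0 // ?mulr_gt0.
Qed.

Lemma excess_ge0 {R : realFieldType} (s1 s2 t a b : R) :
  0 <= s1 -> 0 <= s2 -> 0 <= a -> 0 <= b -> 0 <= excess s1 s2 t a b.
Proof.
move=> s1p s2p a0 b0; rewrite /excess.
have sa : 0 <= s1 * a by exact: mulr_ge0.
have sb : 0 <= s2 * b by exact: mulr_ge0.
apply: divr_ge0; apply: mulr_ge0.
- exact: mulr_ge0.
- exact: mulr_ge0 (mulr_ge0 sa sb) (sqr_ge0 _).
- exact: sqr_ge0.
- exact: addr_ge0.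
Qed.

Lemma excess_gt0 {R : realFieldType} (s1 s2 t a b : R) :
  0 < s1 -> 0 < s2 -> 0 <= t -> 0 < a -> 0 < b -> t != 1 ->
  0 < excess s1 s2 t a b.
Proof.
move=> s1p s2p t0 a0 b0 t1; rewrite /excess.
have sqr_gt0 : 0 < (t - 1) ^+ 2 by rewrite exprn_even_gt0 // subr_eq0.
have den_gt0 : 0 < s1 * a + s2 * b * t.
  by rewrite ltr_wpDr ?mulr_gt0 // mulr_ge0 // mulr_ge0 // ltW.
have sa : 0 < s1 * a by exact: mulr_gt0.
have sb : 0 < s2 * b by exact: mulr_gt0.
apply: divr_gt0; apply: mulr_gt0.
- exact: mulr_gt0.
- exact: mulr_gt0 (mulr_gt0 sa sb) sqr_gt0.
- exact: exprn_gt0.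
- exact: addr_gt0.
Qed.

Lemma excess_at1 {R : realFieldType} (s1 s2 a b : R) : excess s1 s2 1 a b = 0.
Proof. by rewrite /excess subrr expr0n /= !mulr0 mul0r. Qed.

Lemma rel_ratio_eq1 {R : realFieldType} (Z1 Z2 rt : R) : 0 < Z1 -> 0 < Z2 ->
  (rt * Z2 / Z1 == 1) = (rt == Z1 / Z2).
Proof.
move=> z1 z2; have [Z1n0 Z2n0] : Z1 != 0 /\ Z2 != 0 by rewrite !gt_eqF.
apply/eqP/eqP => [ratio1|->]; last by field; rewrite Z1n0 Z2n0.
have -> : rt = (rt * Z2 / Z1) * (Z1 / Z2) by field; rewrite Z1n0 Z2n0.
by rewrite ratio1 mul1r.
Qed.

Section bridge_objective.
Context {dT : measure_display} {R : realType} {T : measurableType dT}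
  (mu : {measure set T -> \bar R}).
Context {p1 q2 qt1 qt2 : T -> R} {Z1 Z2 s1 s2 : R}.
Hypotheses (dp1 : pos_density mu p1) (dq2 : pos_density mu q2)
  (z1 : 0 < Z1) (z2 : 0 < Z2) (qt1E : forall x, qt1 x = Z1 * p1 x)
  (qt2E : forall x, qt2 x = Z2 * q2 x)
  (s1p : 0 < s1) (s2p : 0 < s2) (s12 : s1 + s2 = 1).

Let mp1 : measurable_fun setT p1. Proof. by case: dp1. Qed.
Let mq2 : measurable_fun setT q2. Proof. by case: dq2. Qed.
Let p1_gt0 x : 0 < p1 x. Proof. by case: dp1 => _ []. Qed.
Let q2_gt0 x : 0 < q2 x. Proof. by case: dq2 => _ []. Qed.
Let ip1 := density_integrable mu dp1.
Let iq2 := density_integrable mu dq2.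
Let mip1 : measurable_fun setT (fun x => (p1 x)^-1).
Proof. exact: measurable_fun_inv_pos. Qed.
Let miq2 : measurable_fun setT (fun x => (q2 x)^-1).
Proof. exact: measurable_fun_inv_pos. Qed.

Let G rt := G_obj mu s1 s2 qt1 p1 qt2 q2 rt.
Let H := harmonic_div mu s2 p1 q2.

Let hmean x := (s2 / p1 x + (1 - s2) / q2 x)^-1.

Let s2_lt1 : 0 < 1 - s2. Proof. by rewrite subr_gt0 -s12 ltrDr. Qed.

Let hmean_gt0 x : 0 < hmean x.
Proof. by rewrite invr_gt0 addr_gt0 // divr_gt0. Qed.

Let hmean_integrable : mu.-integrable setT (EFin \o hmean).
Proof.
apply: (integrable_dominated mu _ (fun x => s2^-1 * p1 x)).
- apply: measurable_fun_inv_pos => [|x]; first by measurability.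
  by rewrite addr_gt0 ?divr_gt0.
- exact: integrable_scale.
- move=> x; rewrite !gtr0_norm ?hmean_gt0 ?mulr_gt0 ?invr_gt0 //.
  rewrite -[s2^-1 * _]invrK invfM invrK lef_pV2 ?posrE ?addr_gt0 ?divr_gt0 //.
  by rewrite lerDl divr_ge0 // ltW.
Qed.

Lemma harmonic_div_lt1 : 0 < 1 - H.
Proof.
rewrite /H /harmonic_div opprB addrC subrK.
exact: (Rintegral_gt0 mu hmean_gt0 hmean_integrable (density_mass_neq0 mu dp1)).
Qed.

Section fixed_ratio.
Variable rt : R.
Hypothesis rt0 : 0 < rt.

Let den x := s1 * (Z1 * p1 x) + s2 * (Z2 * q2 x) * rt.
Let den_gt0 x : 0 < den x. Proof. by rewrite addr_gt0 // !mulr_gt0. Qed.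
Let mden : measurable_fun setT (fun x => (den x)^-1).
Proof. by apply: measurable_fun_inv_pos => //; measurability. Qed.

Let bridge1 x := p1 x * (s2 * (Z2 * q2 x) * rt / den x) ^+ 2.
Let bridge2 x := q2 x * (s1 * (Z1 * p1 x) / den x) ^+ 2.

Let bridge1_integrable : mu.-integrable setT (EFin \o bridge1).
Proof.
apply: (integrable_dominated mu _ p1) => //; first by measurability.
move=> x; have frac_ge0 : 0 <= s2 * (Z2 * q2 x) * rt / den x.
  by rewrite divr_ge0 ?ltW // !mulr_gt0.
have frac_le1 : s2 * (Z2 * q2 x) * rt / den x <= 1.
  by rewrite /den addrC part_over_sum_le1 // !mulr_gt0.
rewrite (ger0_norm (ltW (p1_gt0 x))) ger0_norm; last exact: mulr_ge0 (ltW _) (sqr_ge0 _).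
by rewrite /bridge1 ler_piMr ?exprn_ile1 // ltW.
Qed.

Let bridge2_integrable : mu.-integrable setT (EFin \o bridge2).
Proof.
apply: (integrable_dominated mu _ q2) => //; first by measurability.
move=> x; have frac_ge0 : 0 <= s1 * (Z1 * p1 x) / den x.
  by rewrite divr_ge0 ?ltW // !mulr_gt0.
have frac_le1 : s1 * (Z1 * p1 x) / den x <= 1.
  by rewrite /den part_over_sum_le1 // !mulr_gt0.
rewrite (ger0_norm (ltW (q2_gt0 x))) ger0_norm; last exact: mulr_ge0 (ltW _) (sqr_ge0 _).
by rewrite /bridge2 ler_piMr ?exprn_ile1 // ltW.
Qed.

Definition bridge_gap x := excess s1 s2 (rt * Z2 / Z1) (p1 x) (q2 x).

Let bridge_gapE x :
  bridge_gap x = s2^-1 * bridge1 x + s1^-1 * bridge2 x - hmean x.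
Proof. by rewrite bridge_integrand_split // addrC addKr. Qed.

Let bridge_gap_integrable : mu.-integrable setT (EFin \o bridge_gap).
Proof.
have := integrable_sub mu (integrable_add mu (integrable_scale mu s2^-1 bridge1_integrable)
  (integrable_scale mu s1^-1 bridge2_integrable)) hmean_integrable.
by apply: eq_integrable => // x _; rewrite /= bridge_gapE.
Qed.

Lemma G_obj_gap : G rt = H - Rintegral mu setT bridge_gap.
Proof.
have split_int : s2^-1 * Rintegral mu setT bridge1 + s1^-1 * Rintegral mu setT bridge2
    = Rintegral mu setT hmean + Rintegral mu setT bridge_gap.
  rewrite -(RintegralZl (f := bridge1)) // -(RintegralZl (f := bridge2)) //.
  rewrite -(RintegralD measurableT (integrable_scale mu _ bridge1_integrable)
    (integrable_scale mu _ bridge2_integrable)).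
  rewrite -(RintegralD measurableT hmean_integrable bridge_gap_integrable).
  by apply: eq_Rintegral => x _; rewrite bridge_gapE [RHS]addrC subrK.
transitivity (1 - (s2^-1 * Rintegral mu setT bridge1
                   + s1^-1 * Rintegral mu setT bridge2)).
  by rewrite /G /G_obj /expect (funext qt1E) (funext qt2E) opprD addrA.
by rewrite split_int /H /harmonic_div opprD addrA.
Qed.

Lemma bridge_gap_ge0 : 0 <= Rintegral mu setT bridge_gap.
Proof. by apply: Rintegral_ge0 => x _; rewrite excess_ge0 ?ltW. Qed.

Lemma bridge_gap_gt0 : rt != Z1 / Z2 -> 0 < Rintegral mu setT bridge_gap.
Proof.
rewrite -rel_ratio_eq1 // => ne1.
apply: (Rintegral_gt0 mu _ bridge_gap_integrable (density_mass_neq0 mu dp1)) => x.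
have ratio_ge0 : 0 <= rt * Z2 / Z1 by rewrite divr_ge0 ?mulr_ge0 ?ltW.
exact: excess_gt0.
Qed.

End fixed_ratio.

Lemma bridge_gap_at_ratio : Rintegral mu setT (bridge_gap (Z1 / Z2)) = 0.
Proof.
rewrite (eq_Rintegral _ (g := fun _ => 0)) ?Rintegral_cst ?mul0r // => x _.
by rewrite /bridge_gap mulfVK ?gt_eqF // divff ?gt_eqF // excess_at1.
Qed.

Lemma G_obj_at_ratio : G (Z1 / Z2) = H.
Proof. by rewrite G_obj_gap ?divr_gt0 // bridge_gap_at_ratio subr0. Qed.

Lemma G_obj_lt_harmonic rt : 0 < rt -> rt != Z1 / Z2 -> G rt < H.
Proof. by move=> rt0 ne; rewrite G_obj_gap // ltrBlDr ltrDl bridge_gap_gt0. Qed.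

Lemma sup_G_obj : sup_pos G = H.
Proof.
rewrite (sup_pos_attained (Z1 / Z2)) ?divr_gt0 ?G_obj_at_ratio // => rt rt0.
by rewrite G_obj_gap // gerBl bridge_gap_ge0.
Qed.

End bridge_objective.

Lemma rel_mse_monotone {R : realFieldType} (c H1 H2 : R) : 0 < c ->
  0 < 1 - H2 -> H1 <= H2 -> c * ((1 - H1)^-1 - 1) <= c * ((1 - H2)^-1 - 1).
Proof.
move=> c0 H2lt1 H12; have H1lt1 : 0 < 1 - H1 by rewrite (lt_le_trans H2lt1) ?lerB.
by rewrite ler_pM2l // lerD2r lef_pV2 ?posrE // lerD2l lerN2.
Qed.

Theorem proposition3 (R : realType) (dT : measure_display) (T : measurableType dT)
  (mu : {measure set T -> \bar R}) (l : nat)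
  (q1 q2 qt1 qt2 : T -> R) (Z1 Z2 : R)
  (Tphi Tphi_inv : 'rV[R]_l -> T -> T)
  (q1phi qt1phi : 'rV[R]_l -> T -> R)
  (n1 n2 : nat) (rs : R) (phis : 'rV[R]_l) :
  pos_density mu q1 -> pos_density mu q2 ->
  0 < Z1 -> 0 < Z2 ->
  (forall x, qt1 x = Z1 * q1 x) -> (forall x, qt2 x = Z2 * q2 x) ->
  (* T_phi : invertible, measurable with measurable inverse *)
  (forall phi, measurable_fun setT (Tphi phi)) ->
  (forall phi, measurable_fun setT (Tphi_inv phi)) ->
  (forall phi, cancel (Tphi phi) (Tphi_inv phi)) ->
  (forall phi, cancel (Tphi_inv phi) (Tphi phi)) ->
  (* q1phi phi : positive density of T_phi(w), w ~ q1 *)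
  (forall phi, pos_density mu (q1phi phi)) ->
  (forall phi A, measurable A ->
     (\int[mu]_(x in A) (q1phi phi x)%:E =
      \int[mu]_(x in Tphi phi @^-1` A) (q1 x)%:E)%E) ->
  (* unnormalized version *)
  (forall phi x, qt1phi phi x = Z1 * q1phi phi x) ->
  (1 <= n1)%N -> (1 <= n2)%N ->
  let n : R := (n1 + n2)%:R in
  let s1 : R := n1%:R / n in
  let s2 : R := n2%:R / n in
  let G := fun rt phi => G_obj mu s1 s2 (qt1phi phi) (q1phi phi) qt2 q2 rt in
  let H := fun phi => harmonic_div mu s2 (q1phi phi) q2 in
  (* (rs, phis) solves min_phi max_{rt>0} G(rt, phi) *)
  0 < rs ->
  G rs phis = sup_pos (fun rt => G rt phis) ->
  (forall phi, sup_pos (fun rt => G rt phis) <= sup_pos (fun rt => G rt phi)) ->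
  [/\ rs = Z1 / Z2,
      (forall phi, G rs phi = H phi),
      (forall phi, H phis <= H phi) &
      (forall phi, (n * s1 * s2)^-1 * ((1 - H phis)^-1 - 1)
                   <= (n * s1 * s2)^-1 * ((1 - H phi)^-1 - 1))].
Proof.
move=> _ dq2 z1 z2 _ qt2E _ _ _ _ dphi _ qt1E n1p n2p n s1 s2 G H rs0 rs_max phis_min.
have n0 : 0 < n by rewrite ltr0n addn_gt0 n1p.
have s1p : 0 < s1 by rewrite divr_gt0 // ltr0n.
have s2p : 0 < s2 by rewrite divr_gt0 // ltr0n.
have s12 : s1 + s2 = 1 by rewrite -mulrDl -natrD divff // gt_eqF.
have supGE phi := sup_G_obj mu (dphi phi) dq2 z1 z2 (qt1E phi) qt2E s1p s2p s12.
have G_ratio phi := G_obj_at_ratio mu (dphi phi) dq2 z1 z2 (qt1E phi) qt2E s1p s2p s12.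
have rsE : rs = Z1 / Z2.
  apply/eqP; apply: contraT => ne.
  have := G_obj_lt_harmonic mu (dphi phis) dq2 z1 z2 (qt1E phis) qt2E s1p s2p s12 rs rs0 ne.
  by rewrite -/(G rs phis) rs_max supGE ltxx.
have H_min phi : H phis <= H phi by have := phis_min phi; rewrite !supGE.
have c0 : 0 < (n * s1 * s2)^-1.
  by rewrite invr_gt0; exact: mulr_gt0 (mulr_gt0 n0 s1p) s2p.
split => // phi; first by rewrite rsE /G /H G_ratio.
apply: rel_mse_monotone c0 _ (H_min phi).
exact: (harmonic_div_lt1 mu (dphi phi) dq2 s1p s2p s12).
Qed.
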